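(* Let $(S,\mu)$ be a complete positive measure space and let $X$ be a Banach space whose norm is Fréchet differentiable. A non-zero element $f\in L^1(\mu,X)$ is a smooth point of $L^1(\mu,X)$ if $f(s)\neq 0$ for $\mu$-almost every $s\in S$. Conversely, if in addition $\mu$ is $\sigma$-finite and a non-zero $f\in L^1(\mu,X)$ is a smooth point of $L^1(\mu,X)$, then $f(s)\neq 0$ for $\mu$-almost every $s\in S$.
   Context: $L^1(\mu,X)$ is the Lebesgue–Bochner space of (classes of a.e. equal) strongly measurable $f:S\to X$ with $\int_S\|f(s)\|\,d\mu(s)<\infty$, normed by $\|f\|=\int_S\|f(s)\|\,d\mu(s)$. For a non-zero $x$ in a normed space $Y$, a support map at $x$ is a norm-one bounded linear functional $F$ on $Y$ with $F(x)=\|x\|$; $x$ is smooth if the support map at $x$ is unique. The norm of $X$ is Fréchet differentiable if for every non-zero $x\in X$ there is $\varphi\in X^*$ with $\lim_{h\to0}\big|\|x+h\|-\|x\|-\varphi(h)\big|/\|h\|=0$. *)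

From HB Require Import structures.
From mathcomp Require Import all_boot all_order all_algebra.
From mathcomp Require Import all_classical all_reals all_analysis.
Set Implicit Arguments. Unset Strict Implicit. Unset Printing Implicit Defensive.
Import Order.TTheory GRing.Theory Num.Theory.
Import numFieldNormedType.Exports.
Local Open Scope classical_set_scope.
Local Open Scope ring_scope.

Definition frechet_diff_norm (R : realType) (X : normedModType R) : Prop :=
  forall x : X, x != 0 ->
    exists phi : X -> R,
      (forall (a : R) (u v : X), phi (a *: u + v) = a * phi u + phi v) /\
      continuous phi /\
      (fun h : X => (`|x + h| - `|x| - phi h) / `|h|) @ 0^' --> (0 : R).

Section Bochner.
Context (R : realType) (d : measure_display) (S : measurableType d)
  (X : normedModType R) (mu : {measure set S -> \bar R}).

Definition simple_fun (g : S -> X) : Prop :=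
  finite_set (range g) /\ forall x : X, measurable (g @^-1` [set x]).

Definition strongly_measurable (f : S -> X) : Prop :=
  exists g : nat -> S -> X, (forall n, simple_fun (g n)) /\
    {ae mu, forall s, (fun n => g n s) @ \oo --> f s}.

Definition L1norm (f : S -> X) : \bar R := (\int[mu]_s (`|f s|)%:E)%E.

Definition L1 (f : S -> X) : Prop :=
  strongly_measurable f /\ (L1norm f < +oo)%E.

Definition L1zero (f : S -> X) : Prop := {ae mu, forall s, f s = 0}.

(* A bounded linear functional on L^1(mu,X) is represented by a map
   F : (S -> X) -> R, linear on representatives, and bounded; boundedness
   forces F to vanish on null functions, so F is well defined on classes.
   Norm one: sup_{g <> 0} |F g| / ||g|| = 1, i.e. |F g| <= ||g|| for all g
   and for every e > 0 some g has |F g| > (1 - e) ||g||. *)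
Definition support_map (f : S -> X) (F : (S -> X) -> R) : Prop :=
  [/\ (forall (a : R) (g h : S -> X), L1 g -> L1 h ->
         F (fun s => a *: g s + h s) = a * F g + F h),
      (forall g, L1 g -> ((`|F g|)%:E <= L1norm g)%E),
      (forall e : R, 0 < e -> exists g, L1 g /\
         (((1 - e) * fine (L1norm g))%:E < (`|F g|)%:E)%E) &
      (F f)%:E = L1norm f].

Definition smooth_point (f : S -> X) : Prop :=
  (exists F, support_map f F) /\
  forall F G, support_map f F -> support_map f G ->
    forall g, L1 g -> F g = G g.

End Bochner.

From HB Require Import structures.
From mathcomp Require Import all_boot all_order all_algebra.
From mathcomp Require Import all_classical all_reals all_analysis.
From mathcomp Require Import lra ring measurable_realfun.
Import Order.TTheory GRing.Theory Num.Theory.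
Import numFieldNormedType.Exports.
Local Open Scope classical_set_scope.
Local Open Scope ring_scope.
Set Implicit Arguments. Unset Strict Implicit. Unset Printing Implicit Defensive.

(* For x <> 0 the Fréchet derivative D_x of the norm is a linear functional with
   |D_x y| <= ||y|| and D_x x = ||x||, and D_x y is the limit of the difference
   quotients n (||x + y/n|| - ||x||), which are dominated by ||y||.  For any support
   map F at f, F g <= n (||f + g/n||_1 - ||f||_1) = int n (||f + g/n|| - ||f||), so if
   f <> 0 a.e. dominated convergence gives F g <= int D_(f s) (g s) ds; applied to -g
   this forces F = int D_f, hence the support map is unique.  Conversely, if f
   vanishes on a set B of positive finite measure (which exists by sigma-finiteness),
   the functional D_(f s) may be replaced on B by D_(f s0) for a point with
   f s0 <> 0, giving a second support map that differs from the first on 1_B f s0. *)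

Section norm_derivative.
Context (R : realType) (X : normedModType R).

Definition norm_dquot (x y : X) (n : nat) : R :=
  n.+1%:R * (`|x + n.+1%:R^-1 *: y| - `|x|).

Lemma norm_dquot_le (x y : X) n : `|norm_dquot x y n| <= `|y|.
Proof.
rewrite /norm_dquot normrM ger0_norm // -ler_pdivlMl ?ltr0Sn //.
apply: le_trans (ler_dist_dist _ _) _.
by rewrite addrAC subrr add0r normrZ ger0_norm ?invr_ge0 // mulrC.
Qed.

Lemma norm_dquot_id (x : X) n : norm_dquot x x n = `|x|.
Proof.
rewrite /norm_dquot -{1}(scale1r x) -scalerDl normrZ ger0_norm; last first.
  by rewrite addr_ge0 // invr_ge0.
by rewrite -{2}(mul1r `|x|) -mulrBl addrAC subrr add0r mulrA divff ?mul1r.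
Qed.

Lemma linear_for0 (phi : X -> R) : linear_for *%R phi -> phi 0 = 0.
Proof. by move=> lin; have := lin 1 0 0; rewrite scaler0 addr0 mul1r; lra. Qed.

Lemma linear_forZ (phi : X -> R) : linear_for *%R phi ->
  forall a u, phi (a *: u) = a * phi u.
Proof. by move=> lin a u; have := lin a u 0; rewrite (linear_for0 lin) !addr0. Qed.

(* The value 0 at x = 0 is a convention: it only matters where f vanishes. *)
Definition norm_deriv (x y : X) : R :=
  if x == 0 then 0 else lim (norm_dquot x y @ \oo).

Lemma norm_deriv0l (y : X) : norm_deriv 0 y = 0.
Proof. by rewrite /norm_deriv eqxx. Qed.

Hypothesis frechet : frechet_diff_norm X.

Lemma frechet_norm_dquot_cvg (x : X) : x != 0 ->
  exists2 phi : X -> R, linear_for *%R phi &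
    forall y, norm_dquot x y @ \oo --> phi y.
Proof.
move=> x0; have [phi [lin [_ cv]]] := frechet x0.
exists phi => // y; have [->|y0] := eqVneq y 0.
  rewrite linear_for0 //; suff -> : norm_dquot x 0 = fun=> 0 by exact: cvg_cst.
  by apply/funext => n; rewrite /norm_dquot scaler0 addr0 subrr mulr0.
pose h n : X := n.+1%:R^-1 *: y.
have h0 : h @ \oo --> (0 : X)^'.
  have hn0 n : h n != 0 by rewrite scaler_eq0 negb_or y0 andbT invr_eq0 pnatr_eq0.
  have hcv : h @ \oo --> (0 : X).
    by rewrite -(scale0r y); apply: cvgZr_tmp; exact: cvg_harmonic.
  move=> P /= HP; have [N _ HN] := hcv _ HP.
  by exists N => // n Nn; exact: HN _ Nn (hn0 n).
pose F h : R := (`|x + h| - `|x| - phi h) / `|h|.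
suff -> : norm_dquot x y = fun n => (F \o h) n * `|y| + phi y.
  rewrite -{2}(add0r (phi y)) -(mul0r `|y|); apply: cvgD; last exact: cvg_cst.
  by apply: cvgMr_tmp; exact: cvg_comp h0 cv.
apply/funext => n; rewrite /F /h /= linear_forZ // normrZ ger0_norm ?invr_ge0 //.
have ny : `|y| != 0 by rewrite normr_eq0.
by rewrite /norm_dquot; field; rewrite ny andbT addrC natr1 pnatr_eq0.
Qed.

Lemma norm_deriv_cvg (x y : X) : x != 0 -> norm_dquot x y @ \oo --> norm_deriv x y.
Proof.
move=> x0; have [phi _ cv] := frechet_norm_dquot_cvg x0.
by rewrite /norm_deriv (negbTE x0) (cvg_lim _ (cv y)).
Qed.

Lemma norm_deriv_linear (x : X) : linear_for *%R (norm_deriv x).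
Proof.
move=> a u v; rewrite /norm_deriv.
case: eqP => [_|/eqP x0]; first by rewrite mulr0 addr0.
have [phi lin cv] := frechet_norm_dquot_cvg x0.
by rewrite !(cvg_lim _ (cv _)) ?lin.
Qed.

Lemma norm_deriv0r (x : X) : norm_deriv x 0 = 0.
Proof. exact/linear_for0/norm_deriv_linear. Qed.

Lemma norm_deriv_le (x y : X) : `|norm_deriv x y| <= `|y|.
Proof.
have [->|x0] := eqVneq x 0; first by rewrite norm_deriv0l normr0.
have := norm_deriv_cvg (y := y) x0; move=> /cvg_norm cv.
rewrite -(cvg_lim _ cv) //; apply: limr_le.
  by apply/cvg_ex; exists `|norm_deriv x y|.
by apply: nearW => n; exact: norm_dquot_le.
Qed.

Lemma norm_deriv_id (x : X) : norm_deriv x x = `|x|.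
Proof.
rewrite /norm_deriv; case: eqP => [->|_]; first by rewrite normr0.
suff -> : norm_dquot x x = fun=> `|x| by exact: lim_cst.
by apply/funext => n; exact: norm_dquot_id.
Qed.

End norm_derivative.

Section L1_functions.
Context (R : realType) (d : measure_display) (S : measurableType d)
  (mu : {measure set S -> \bar R}) (X : normedModType R).

Lemma measurable_fun_simple_comp (g : S -> X) (phi : X -> R) :
  simple_fun g -> measurable_fun setT (phi \o g).
Proof.
move=> [fin mpre] _ B mB; rewrite setTI.
have -> : (phi \o g) @^-1` B = \bigcup_(y in range g `&` phi @^-1` B) g @^-1` [set y].
  apply/seteqP; split => [s Bs | s [y [[s' _ gs'] By] gsy]].
    by exists (g s) => //; split => //; exists s.
  by rewrite /preimage /= gsy.
by apply: fin_bigcup_measurable => [|y _]; [exact: finite_setIl|exact: mpre].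
Qed.

Lemma simple_fun_ZD (a : R) (g h : S -> X) :
  simple_fun g -> simple_fun h -> simple_fun (fun s => a *: g s + h s).
Proof.
move=> [fg mg] [fh mh]; split.
  apply: (@sub_finite_set _ _
    ((fun p : X * X => a *: p.1 + p.2) @` (range g `*` range h))).
    by move=> _ [s _ <-]; exists (g s, h s) => //; split; exists s.
  exact/finite_image/finite_setX.
move=> x.
have -> : (fun s => a *: g s + h s) @^-1` [set x] =
    \bigcup_(y in range g) (g @^-1` [set y] `&` h @^-1` [set x - a *: y]).
  apply/seteqP; split => [s /= <- | s [y _ [/= gsy hs]]].
    by exists (g s) => //; split => //=; rewrite addrAC subrr add0r.
  by rewrite /= gsy hs addrC subrK.
by apply: fin_bigcup_measurable => // y _; exact: measurableI.
Qed.

Lemma simple_fun_indic (B : set S) (x : X) : measurable B ->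
  simple_fun (fun s => if s \in B then x else 0).
Proof.
move=> mB; split.
  apply: (@sub_finite_set _ _ [set x; 0]); last exact: finite_set2.
  by move=> _ [s _ <-]; case: ifP => _; [left|right].
move=> y.
have -> : (fun s => if s \in B then x else 0) @^-1` [set y] =
    (B `&` [set _ | x = y]) `|` (~` B `&` [set _ | 0 = y]).
  apply/seteqP; split => s /=.
    case: ifPn => sB <-; first by left; split => //; exact: set_mem.
    by right; split => //; rewrite -notin_setE.
  by case => -[sB e]; [rewrite mem_set|rewrite memNset].
have mcst (P : Prop) : measurable [set _ : S | P].
  have [p|np] := pselect P; first by rewrite (_ : [set _ | P] = setT) ?predeqE.
  by rewrite (_ : [set _ | P] = set0) ?predeqE.
by apply: measurableU; apply: measurableI => //; exact: measurableC.
Qed.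

Lemma strongly_measurable_simple (g : S -> X) :
  simple_fun g -> strongly_measurable mu g.
Proof. by move=> sg; exists (fun=> g); split => //; apply: aeW => s; exact: cvg_cst. Qed.

Lemma strongly_measurable_ZD (a : R) (g h : S -> X) :
  strongly_measurable mu g -> strongly_measurable mu h ->
  strongly_measurable mu (fun s => a *: g s + h s).
Proof.
move=> [G [sG cG]] [H [sH cH]]; exists (fun n s => a *: G n s + H n s); split.
  by move=> n; exact: simple_fun_ZD.
by apply: filterS2 cG cH => s cg ch; apply: cvgD => //; apply: cvgZ => //; exact: cvg_cst.
Qed.

Hypothesis mu_complete : measure_is_complete mu.

Lemma strongly_measurable_norm (u : S -> X) : strongly_measurable mu u ->
  measurable_fun setT (fun s => `|u s|).
Proof.
move=> [G [sG Gu]]; apply/measurable_EFinP.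
apply: (@ae_measurable_fun _ _ _ _ mu_complete _
  (fun s => limn_esup (fun n => (`|G n s|)%:E))).
  apply: filterS Gu => s /cvg_norm Gus _.
  have Gus' : (fun n => (`|G n s|)%:E) @ \oo --> (`|u s|)%:E.
    by apply: cvg_EFin Gus; exact: nearW.
  by rewrite is_cvg_limn_esupE ?(cvg_lim _ Gus') //; apply/cvg_ex; eexists; exact: Gus'.
apply: measurable_fun_limn_esup => n; apply/measurable_EFinP.
exact: (measurable_fun_simple_comp Num.norm (sG n)).
Qed.

Lemma strongly_measurable_zero_set (u : S -> X) : strongly_measurable mu u ->
  measurable [set s | u s = 0].
Proof.
move=> su; rewrite -[X in measurable X]setTI.
have -> : [set s | u s = 0] = (fun s => `|u s|) @^-1` [set 0].
  by apply/seteqP; split => s /=; [move->; rewrite normr0|exact: normr0_eq0].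
exact: (strongly_measurable_norm su measurableT (measurable_set1 0)).
Qed.


Lemma sigma_finite_not_negligible (Z : set S) : sigma_finite setT mu ->
  measurable Z -> ~ mu.-negligible Z ->
  exists2 B, B `<=` Z & [/\ measurable B, (0 < mu B)%E & (mu B < +oo)%E].
Proof.
move=> [F UF mF] mZ Zpos.
have mZF i : measurable (Z `&` F i) by apply: measurableI => //; case: (mF i).
have [i Fipos] : exists i, (0 < mu (Z `&` F i))%E.
  apply: contrapT => Fi0; apply: Zpos.
  suff : mu.-negligible (\bigcup_i (Z `&` F i)).
    apply: negligibleS => s Zs; have [i _ Fis] : (\bigcup_i F i) s by rewrite -UF.
    by exists i.
  apply: negligible_bigcup => i; exists (Z `&` F i); split => //.
  apply/eqP; rewrite eq_le measure_ge0 andbT leNgt.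
  by apply/negP => ?; apply: Fi0; exists i.
exists (Z `&` F i); first exact: subIsetl.
split => //; apply: le_lt_trans (mF i).2.
by rewrite le_measure ?inE //; case: (mF i).
Qed.

Definition L1_linear (F : (S -> X) -> R) : Prop :=
  forall (a : R) (g h : S -> X), L1 mu g -> L1 mu h ->
    F (fun s => a *: g s + h s) = a * F g + F h.

Lemma L1_integrable (g : S -> X) : L1 mu g ->
  mu.-integrable setT (fun s => (`|g s|)%:E).
Proof.
move=> [sg gfin]; apply/integrableP; split.
  exact/measurable_EFinP/(strongly_measurable_norm sg).
by under eq_integral do rewrite /= normr_id.
Qed.

Lemma L1_ZD (a : R) (g h : S -> X) : L1 mu g -> L1 mu h ->
  L1 mu (fun s => a *: g s + h s).
Proof.
move=> Lg Lh; have sgh := strongly_measurable_ZD a Lg.1 Lh.1; split => //.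
have : mu.-integrable setT (fun s => (`|a *: g s + h s|)%:E).
  apply: (@le_integrable _ _ _ mu _ measurableT _
    ((fun s => `|a|%:E * (`|g s|)%:E) \+ (fun s => (`|h s|)%:E))%E) => //.
  - exact/measurable_EFinP/(strongly_measurable_norm sgh).
  - move=> s _ /=; rewrite normr_id lee_fin ger0_norm ?addr_ge0 ?mulr_ge0 //.
    by rewrite -normrZ ler_normD.
  - by apply: (integrableD measurableT); [apply: (integrableZl measurableT)|];
      exact: L1_integrable.
by move/integrableP => [_]; under eq_integral do rewrite /= normr_id.
Qed.

Lemma L1_linear_le_eq (F G : (S -> X) -> R) : L1_linear F -> L1_linear G ->
  (forall g, L1 mu g -> F g <= G g) -> forall g, L1 mu g -> F g = G g.
Proof.
move=> linF linG FG g Lg; apply/le_anti; rewrite FG //=.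
(* [-g] is taken as [(-2) g + g] so that linearity on L1 applies. *)
by have := FG _ (L1_ZD (-2) Lg Lg); rewrite linF // linG //; lra.
Qed.

Lemma L1normK (f : S -> X) : L1 mu f -> (fine (L1norm mu f))%:E = L1norm mu f.
Proof. by move=> [_ Lf]; rewrite fineK // ge0_fin_numE //; exact: integral_ge0. Qed.

Lemma L1norm_gt0 (f : S -> X) : L1 mu f -> ~ L1zero mu f -> 0 < fine (L1norm mu f).
Proof.
move=> Lf nz; apply: fine_gt0; rewrite Lf.2 andbT lt_neqAle integral_ge0 ?andbT //.
apply/eqP => f0; apply: nz.
have := (ae_eq_integral_abs mu measurableT (measurable_int _ (L1_integrable Lf))).1.
under eq_integral do rewrite /= normr_id.
move=> /(_ (esym f0)); apply: filterS => s /(_ I) /=.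
by move=> fs0; apply: normr0_eq0; exact: EFin_inj.
Qed.

Lemma L1_indic (B : set S) (x : X) : measurable B -> (mu B < +oo)%E ->
  L1 mu (fun s => if s \in B then x else 0).
Proof.
move=> mB Bfin; split; first exact/strongly_measurable_simple/simple_fun_indic.
rewrite /L1norm (eq_integral (fun s => (`|x|)%:E * (\1_B s)%:E))%E; last first.
  by move=> s _; rewrite indicE -EFinM; case: ifP; rewrite ?normr0 ?mulr1 ?mulr0.
rewrite ge0_integralZl_EFin //; last exact/measurable_EFinP/measurable_indic.
by rewrite integral_indic // setIT lte_mul_pinfty.
Qed.

End L1_functions.

Section L1_norm_deriv.
Context (R : realType) (d : measure_display) (S : measurableType d)
  (mu : {measure set S -> \bar R}) (X : normedModType R).
Hypotheses (mu_complete : measure_is_complete mu) (frechet : frechet_diff_norm X).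

Definition L1_norm_deriv (k g : S -> X) : R := \int[mu]_s norm_deriv (k s) (g s).

Lemma measurable_norm_dquot (k g : S -> X) n :
  strongly_measurable mu k -> strongly_measurable mu g ->
  measurable_fun setT (fun s => norm_dquot (k s) (g s) n).
Proof.
move=> sk sg; apply: measurable_funM => //.
apply: measurable_funB; last exact: (strongly_measurable_norm mu_complete).
have -> : (fun s => `|k s + n.+1%:R^-1 *: g s|) = (fun s => `|n.+1%:R^-1 *: g s + k s|).
  by apply/funext => s; rewrite addrC.
exact/(strongly_measurable_norm mu_complete)/strongly_measurable_ZD.
Qed.

Lemma measurable_norm_deriv (k g : S -> X) :
  strongly_measurable mu k -> strongly_measurable mu g ->
  measurable_fun setT (fun s => norm_deriv (k s) (g s)).
Proof.
move=> sk sg; have mk0 : measurable_fun setT (fun s => k s == 0).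
  apply: (measurable_fun_bool true); rewrite setTI.
  have -> : (fun s => k s == 0) @^-1` [set true] = [set s | k s = 0].
    by apply/seteqP; split => s /eqP.
  exact: (strongly_measurable_zero_set mu_complete).
apply: (@measurable_fun_cvg _ _ _ _
  (fun n s => if k s == 0 then 0 else norm_dquot (k s) (g s) n)).
  by move=> n; apply: measurable_fun_ifT => //; exact: measurable_norm_dquot.
move=> s _ /=; have [k0|k0] := eqVneq (k s) 0.
  by rewrite k0 norm_deriv0l; exact: cvg_cst.
exact: norm_deriv_cvg.
Qed.

Lemma integrable_norm_deriv (k g : S -> X) : strongly_measurable mu k -> L1 mu g ->
  mu.-integrable setT (EFin \o fun s => norm_deriv (k s) (g s)).
Proof.
move=> sk Lg; apply: (le_integrable measurableT _ _ (L1_integrable mu_complete Lg)).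
  exact/measurable_EFinP/measurable_norm_deriv/Lg.1.
by move=> s _ /=; rewrite lee_fin normr_id norm_deriv_le.
Qed.

Lemma L1_norm_deriv_linear (k : S -> X) : strongly_measurable mu k ->
  L1_linear mu (L1_norm_deriv k).
Proof.
move=> sk a g h Lg Lh; rewrite /L1_norm_deriv.
under eq_Rintegral do rewrite norm_deriv_linear //.
rewrite RintegralD //; last exact: integrable_norm_deriv.
  by rewrite RintegralZl //; exact: integrable_norm_deriv.
exact: (integrableZl measurableT a (integrable_norm_deriv sk Lg)).
Qed.

Lemma L1_norm_deriv_le (k g : S -> X) : strongly_measurable mu k -> L1 mu g ->
  ((`|L1_norm_deriv k g|)%:E <= L1norm mu g)%E.
Proof.
move=> sk Lg; have ik := integrable_norm_deriv sk Lg.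
rewrite EFin_normr_Rintegral //; apply: le_trans (le_abse_integral _ _ _) _ => //.
  exact: measurable_int ik.
apply: ge0_le_integral => //.
- exact/measurableT_comp/(measurable_int _ ik).
- exact/measurable_EFinP/(strongly_measurable_norm mu_complete Lg.1).
- by move=> s _ /=; rewrite lee_fin norm_deriv_le.
Qed.

Lemma L1_norm_deriv_self (k f : S -> X) : (forall s, f s = 0 \/ f s = k s) ->
  L1_norm_deriv k f = fine (L1norm mu f).
Proof.
move=> fk; rewrite /L1_norm_deriv /Rintegral /L1norm; congr fine.
apply: eq_integral => s _.
by case: (fk s) => ->; rewrite ?norm_deriv0r ?norm_deriv_id ?normr0.
Qed.

Lemma L1_norm_deriv_indic (k : S -> X) (B : set S) (x y : X) : measurable B ->
  (forall s, B s -> k s = x) ->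
  L1_norm_deriv k (fun s => if s \in B then y else 0) = norm_deriv x y * fine (mu B).
Proof.
move=> mB kB; rewrite /L1_norm_deriv.
rewrite (@eq_Rintegral _ _ _ mu _ (cst (norm_deriv x y) \_ B)).
  by rewrite -Rintegral_mkcond Rintegral_cst.
move=> s _; rewrite patchE; case: ifPn => [/set_mem/kB -> //|_].
exact: norm_deriv0r.
Qed.

Lemma support_map_L1_norm_deriv (k f : S -> X) : strongly_measurable mu k ->
  L1 mu f -> ~ L1zero mu f -> (forall s, f s = 0 \/ f s = k s) ->
  support_map mu f (L1_norm_deriv k).
Proof.
move=> sk Lf nz fk; split.
- exact: L1_norm_deriv_linear.
- by move=> g; exact: L1_norm_deriv_le.
- move=> e e0; exists f; split => //; rewrite L1_norm_deriv_self // lte_fin.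
  have := L1norm_gt0 mu_complete Lf nz; set p := fine _ => p0.
  have := mulr_gt0 e0 p0; rewrite ger0_norm ?ltW //; lra.
- by rewrite L1_norm_deriv_self // L1normK.
Qed.


Lemma integral_norm_dquot (f g : S -> X) n : L1 mu f -> L1 mu g ->
  (\int[mu]_s (norm_dquot (f s) (g s) n)%:E)%E =
  (n.+1%:R * (fine (L1norm mu (fun s => n.+1%:R^-1 *: g s + f s))
              - fine (L1norm mu f)))%:E.
Proof.
move=> Lf Lg; have Lu := L1_ZD mu_complete n.+1%:R^-1 Lg Lf.
have [iu if_] := (L1_integrable mu_complete Lu, L1_integrable mu_complete Lf).
rewrite EFinM EFinB !L1normK // /L1norm -integralB // -integralZl //; last first.
  exact: (integrableB measurableT).
by apply: eq_integral => s _; rewrite /norm_dquot EFinM EFinB [f s + _]addrC.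
Qed.

Lemma support_map_le_integral_norm_dquot (f g : S -> X) F n :
  L1 mu f -> L1 mu g -> support_map mu f F ->
  ((F g)%:E <= \int[mu]_s (norm_dquot (f s) (g s) n)%:E)%E.
Proof.
move=> Lf Lg [linF leF _ Ff]; rewrite integral_norm_dquot // lee_fin.
set c := n.+1%:R^-1; have Lu := L1_ZD mu_complete c Lg Lf.
have Fu : F (fun s => c *: g s + f s) <= fine (L1norm mu (fun s => c *: g s + f s)).
  by rewrite -lee_fin L1normK // (le_trans _ (leF _ Lu)) // lee_fin ler_norm.
have Ffn : F f = fine (L1norm mu f) by rewrite -Ff.
rewrite linF // Ffn in Fu.
have -> : F g = n.+1%:R * (c * F g) by rewrite mulrA divff ?mul1r.
by rewrite ler_wpM2l //; lra.
Qed.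

Lemma integral_norm_dquot_cvg (f g : S -> X) : L1 mu f -> L1 mu g ->
  {ae mu, forall s, f s != 0} ->
  (\int[mu]_s (norm_dquot (f s) (g s) n)%:E)%E @[n --> \oo] -->
  (L1_norm_deriv f g)%:E.
Proof.
move=> Lf Lg f0; have ifg := integrable_norm_deriv Lf.1 Lg.
rewrite /L1_norm_deriv /Rintegral fineK; last exact: integrable_fin_num ifg.
have cvf : {ae mu, forall s, setT s ->
    (norm_dquot (f s) (g s) n)%:E @[n --> \oo] --> (norm_deriv (f s) (g s))%:E}.
  apply: filterS f0 => s fs0 _; apply: cvg_EFin; first exact: nearW.
  exact: norm_deriv_cvg.
have [_ _ //] := dominated_convergence measurableT
  (fun n => iffRL (measurable_EFinP _ _) (measurable_norm_dquot n Lf.1 Lg.1))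
  (measurable_int _ ifg) cvf (L1_integrable mu_complete Lg)
  (aeW _ (fun s n _ => norm_dquot_le (f s) (g s) n)).
Qed.

Lemma support_map_le_L1_norm_deriv (f g : S -> X) F :
  L1 mu f -> L1 mu g -> {ae mu, forall s, f s != 0} -> support_map mu f F ->
  F g <= L1_norm_deriv f g.
Proof.
move=> Lf Lg f0 Fsupp; rewrite -lee_fin.
have cv := integral_norm_dquot_cvg Lf Lg f0.
rewrite -(cvg_lim _ cv) //; apply: lime_ge; first by apply/cvg_ex; eexists; exact: cv.
by apply: nearW => n; exact: support_map_le_integral_norm_dquot.
Qed.

Lemma support_map_eq_L1_norm_deriv (f : S -> X) F :
  L1 mu f -> {ae mu, forall s, f s != 0} -> support_map mu f F ->
  forall g, L1 mu g -> F g = L1_norm_deriv f g.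
Proof.
move=> Lf f0 Fsupp; apply: (L1_linear_le_eq mu_complete).
- by case: Fsupp.
- exact: (L1_norm_deriv_linear Lf.1).
- by move=> g Lg; exact: support_map_le_L1_norm_deriv.
Qed.

Lemma smooth_point_ae_neq0 (f : S -> X) : L1 mu f -> ~ L1zero mu f ->
  {ae mu, forall s, f s != 0} -> smooth_point mu f.
Proof.
move=> Lf nz f0; split.
  exists (L1_norm_deriv f).
  by apply: (support_map_L1_norm_deriv Lf.1) => // s; right.
by move=> F G FS GS g Lg; rewrite !(support_map_eq_L1_norm_deriv Lf f0).
Qed.

Lemma not_smooth_point_zero_on (f : S -> X) (B : set S) : L1 mu f -> ~ L1zero mu f ->
  measurable B -> (0 < mu B)%E -> (mu B < +oo)%E -> (forall s, B s -> f s = 0) ->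
  ~ smooth_point mu f.
Proof.
move=> Lf nz mB B0 Bfin fB [_ support_uniq].
have [s0 fs0] : exists s0, f s0 != 0.
  apply: contrapT => f0; apply: nz; apply: aeW => s.
  by apply/eqP/negPn/negP => fs; apply: f0; exists s.
pose g s := if s \in B then f s0 else 0.
have Lg : L1 mu g := L1_indic (f s0) mB Bfin.
have Sf := support_map_L1_norm_deriv Lf.1 Lf nz (fun s => or_intror erefl).
have Sfg : support_map mu f (L1_norm_deriv (fun s => 1 *: g s + f s)).
  apply: support_map_L1_norm_deriv => //.
    exact: strongly_measurable_ZD Lg.1 Lf.1.
  move=> s; rewrite /g scale1r; case: ifPn => [/set_mem/fB|_]; first by left.
  by right; rewrite add0r.
have kB s : B s -> 1 *: g s + f s = f s0.
  by move=> Bs; rewrite /g (mem_set Bs) (fB s Bs) addr0 scale1r.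
have := support_uniq _ _ Sf Sfg g Lg.
rewrite (L1_norm_deriv_indic _ mB fB) (L1_norm_deriv_indic _ mB kB).
rewrite norm_deriv0l norm_deriv_id mul0r => /esym/eqP.
rewrite mulf_eq0 normr_eq0 (negbTE fs0) /=; apply/negP.
by rewrite gt_eqF // fine_gt0 // B0 Bfin.
Qed.

Lemma ae_neq0_smooth_point (f : S -> X) : sigma_finite setT mu ->
  L1 mu f -> ~ L1zero mu f -> smooth_point mu f -> {ae mu, forall s, f s != 0}.
Proof.
move=> mu_sfinite Lf nz fsmooth; apply: contrapT => f0.
have Z0 : ~` [set s | f s != 0] = [set s | f s = 0].
  by apply/seteqP; split => s /=; [move/negP; rewrite negbK => /eqP|move->; rewrite eqxx].
have [|B BZ [mB B0 Bfin]] := sigma_finite_not_negligible mu_sfinite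
  (strongly_measurable_zero_set mu_complete Lf.1); first by rewrite -Z0.
exact: not_smooth_point_zero_on Lf nz mB B0 Bfin BZ fsmooth.
Qed.

End L1_norm_deriv.

Unset Implicit Arguments.

Theorem theorem3p1 (R : realType) (d : measure_display) (S : measurableType d)
  (mu : {measure set S -> \bar R}) (X : completeNormedModType R) :
  measure_is_complete mu ->
  frechet_diff_norm X ->
  (forall f : S -> X, L1 mu f -> ~ L1zero mu f ->
     {ae mu, forall s, f s != 0} -> smooth_point mu f) /\
  (sigma_finite setT mu ->
   forall f : S -> X, L1 mu f -> ~ L1zero mu f ->
     smooth_point mu f -> {ae mu, forall s, f s != 0}).
Proof.
move=> mu_complete frechet; split => [f|mu_sfinite f].
  exact: smooth_point_ae_neq0.
exact: ae_neq0_smooth_point.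
Qed.
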